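(* Let $\mathcal{C}$ be a regular category with terminal object $\mathbf{1}$, let $X$ be an object, and let $R$ be a subobject of $X \times X$ which is very weakly point surjective: for every subobject $P$ of $X$ there is an arrow $c : \mathbf{1} \to X$ with $\langle c, c\rangle^*(R) = c^*(P)$ in $\mathsf{Sub}(\mathbf{1})$. Then every natural transformation $\tau : \mathsf{Sub} \Rightarrow \mathsf{Sub}$ has a fixpoint, i.e. there is $s \in \mathsf{Sub}(\mathbf{1})$ with $\tau_{\mathbf{1}}(s) = s$.
   Context: A regular category is a well-powered category with finite limits and images, with images stable under pullback. For an object $A$, $\mathsf{Sub}(A)$ is the poset of subobjects of $A$ (equivalence classes of monomorphisms into $A$, where $m_1 \lesssim m_2$ if $m_1$ factors through $m_2$). For $f : A \to B$, $f^* : \mathsf{Sub}(B) \to \mathsf{Sub}(A)$ is pullback along $f$; this gives a functor $\mathsf{Sub} : \mathcal{C}^{op} \to \mathbf{Set}$. A natural transformation $\tau : \mathsf{Sub} \Rightarrow \mathsf{Sub}$ is a family of functions $\tau_A : \mathsf{Sub}(A) \to \mathsf{Sub}(A)$ with $f^* \circ \tau_B = \tau_A \circ f^*$ for every $f : A \to B$. $\langle c, c\rangle : \mathbf{1} \to X \times X$ is the pairing. *)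

Set Implicit Arguments.
Unset Strict Implicit.

Record Category := {
  Ob :> Type;
  Hom : Ob -> Ob -> Type;
  idm : forall A, Hom A A;
  comp : forall A B C, Hom B C -> Hom A B -> Hom A C;
  comp_assoc : forall A B C D (h : Hom C D) (g : Hom B C) (f : Hom A B),
      comp h (comp g f) = comp (comp h g) f;
  comp_id_l : forall A B (f : Hom A B), comp (idm B) f = f;
  comp_id_r : forall A B (f : Hom A B), comp f (idm A) = f
}.

Arguments Hom {C} : rename.
Arguments idm {C} A : rename.
Arguments comp {C A B C0} _ _ : rename.

Section Defs.
Variable C : Category.

Definition mono {A B : C} (m : Hom A B) : Prop :=
  forall Z (g h : Hom Z A), comp m g = comp m h -> g = h.

Definition is_terminal (T : C) : Prop :=
  forall A : C, exists f : Hom A T, forall g : Hom A T, g = f.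

Definition is_product {A B P : C} (p1 : Hom P A) (p2 : Hom P B) : Prop :=
  forall Q (q1 : Hom Q A) (q2 : Hom Q B),
    exists u : Hom Q P, comp p1 u = q1 /\ comp p2 u = q2 /\
      forall v : Hom Q P, comp p1 v = q1 -> comp p2 v = q2 -> v = u.

Definition is_pullback {A B D P : C} (f : Hom A D) (g : Hom B D)
    (p1 : Hom P A) (p2 : Hom P B) : Prop :=
  comp f p1 = comp g p2 /\
  forall Q (q1 : Hom Q A) (q2 : Hom Q B), comp f q1 = comp g q2 ->
    exists u : Hom Q P, comp p1 u = q1 /\ comp p2 u = q2 /\
      forall v : Hom Q P, comp p1 v = q1 -> comp p2 v = q2 -> v = u.

(* Representatives of subobjects: monomorphisms into A. *)
Definition SubT (A : C) : Type := { B : C & { m : Hom B A | mono m } }.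
Definition sdom {A : C} (S : SubT A) : C := projT1 S.
Definition sarr {A : C} (S : SubT A) : Hom (sdom S) A := proj1_sig (projT2 S).

Definition sub_le {A : C} (S1 S2 : SubT A) : Prop :=
  exists k : Hom (sdom S1) (sdom S2), comp (sarr S2) k = sarr S1.
Definition sub_eq {A : C} (S1 S2 : SubT A) : Prop := sub_le S1 S2 /\ sub_le S2 S1.

Definition is_pb_sub {A B : C} (f : Hom A B) (S : SubT B) (S' : SubT A) : Prop :=
  exists k : Hom (sdom S') (sdom S), is_pullback f (sarr S) (sarr S') k.

Definition is_image {A B I : C} (f : Hom A B) (m : Hom I B) : Prop :=
  mono m /\ (exists e : Hom A I, comp m e = f) /\
  forall I' (m' : Hom I' B), mono m' -> (exists e' : Hom A I', comp m' e' = f) ->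
    exists k : Hom I I', comp m' k = m.

Record regular : Prop := {
  reg_terminal : exists T : C, is_terminal T;
  reg_products : forall A B : C, exists P (p1 : Hom P A) (p2 : Hom P B), is_product p1 p2;
  reg_pullbacks : forall A B D (f : Hom A D) (g : Hom B D),
      exists P (p1 : Hom P A) (p2 : Hom P B), is_pullback f g p1 p2;
  reg_wellpowered : forall A : C, exists (I : Type) (F : I -> SubT A),
      forall S : SubT A, exists i, sub_eq (F i) S;
  reg_images : forall A B (f : Hom A B), exists I (m : Hom I B), is_image f m;
  reg_images_stable : forall A B B' (f : Hom A B) (g : Hom B' B)
      P (p1 : Hom P A) (p2 : Hom P B') I (m : Hom I B) Q (q1 : Hom Q I) (q2 : Hom Q B'),
      is_pullback f g p1 p2 -> is_image f m -> is_pullback m g q1 q2 -> is_image p2 q2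
}.

Definition nat_trans_Sub (tau : forall A : C, SubT A -> SubT A) : Prop :=
  (forall A (S1 S2 : SubT A), sub_eq S1 S2 -> sub_eq (tau A S1) (tau A S2)) /\
  (forall A B (f : Hom A B) (S : SubT B) (S1 S2 : SubT A),
      is_pb_sub f S S1 -> is_pb_sub f (tau B S) S2 -> sub_eq (tau A S1) S2).

End Defs.


Set Implicit Arguments.
Unset Strict Implicit.

(* Lawvere's diagonal argument, internalised in Sub.  With the diagonal
   [d : X -> X x X], let [D := d^*(R)], the subobject "x R x" of X.  Point
   surjectivity applied to [tau_X(D)] yields [c : 1 -> X] with
   [<c,c>^*(R) = c^*(tau_X(D))], and [s := c^*(D)] is a fixpoint:
   [tau_1(s) = c^*(tau_X(D)) = <c,c>^*(R) = (d c)^*(R) = c^*(d^*(R)) = s],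
   by naturality of tau and functoriality of pullback. *)

Section Subobjects.
Variable C : Category.

Lemma sub_le_trans (A : C) (S1 S2 S3 : SubT A) :
  sub_le S1 S2 -> sub_le S2 S3 -> sub_le S1 S3.
Proof.
  intros [k1 H1] [k2 H2]. exists (comp k2 k1). rewrite comp_assoc, H2. exact H1.
Qed.

Lemma sub_eq_sym (A : C) (S1 S2 : SubT A) : sub_eq S1 S2 -> sub_eq S2 S1.
Proof. intros [H12 H21]. split; assumption. Qed.

Lemma sub_eq_trans (A : C) (S1 S2 S3 : SubT A) :
  sub_eq S1 S2 -> sub_eq S2 S3 -> sub_eq S1 S3.
Proof. intros [H12 H21] [H23 H32]. split; eapply sub_le_trans; eassumption. Qed.

Lemma pullback_mono (A B D P : C) (f : Hom A D) (g : Hom B D)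
    (p1 : Hom P A) (p2 : Hom P B) :
  mono g -> is_pullback f g p1 p2 -> mono p1.
Proof.
  intros Hg [Hsq Huniv] Z h1 h2 Hh.
  assert (Hp2 : comp p2 h1 = comp p2 h2).
  { apply Hg. rewrite !comp_assoc, <- Hsq, <- !comp_assoc, Hh. reflexivity. }
  assert (Hcone : comp f (comp p1 h1) = comp g (comp p2 h1))
    by (rewrite !comp_assoc, Hsq; reflexivity).
  destruct (Huniv Z _ _ Hcone) as [u [_ [_ Hu]]].
  rewrite (Hu h1 eq_refl eq_refl). symmetry. apply Hu; auto.
Qed.

Lemma pb_sub_exists (HC : regular C) (A B : C) (f : Hom A B) (S : SubT B) :
  exists S' : SubT A, is_pb_sub f S S'.
Proof.
  destruct (reg_pullbacks HC f (sarr S)) as [P [p1 [p2 Hpb]]].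
  pose proof (pullback_mono (proj2_sig (projT2 S)) Hpb) as Hmono.
  exists (existT _ P (exist _ p1 Hmono)).
  exists p2. exact Hpb.
Qed.

Lemma pb_sub_comp (A B D : C) (f : Hom A B) (g : Hom B D)
    (S : SubT D) (Sg : SubT B) (Sgf Sfg : SubT A) :
  is_pb_sub g S Sg -> is_pb_sub f Sg Sgf -> is_pb_sub (comp g f) S Sfg ->
  sub_eq Sgf Sfg.
Proof.
  intros [kg [Hsqg Hug]] [kf [Hsqf Huf]] [k [Hsq Hu]]. split.
  - assert (Hcone : comp (comp g f) (sarr Sgf) = comp (sarr S) (comp kg kf)).
    { rewrite <- comp_assoc, Hsqf, !comp_assoc, Hsqg. reflexivity. }
    destruct (Hu _ _ _ Hcone) as [u [Hu1 _]]. exists u. exact Hu1.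
  - assert (Hcone : comp g (comp f (sarr Sfg)) = comp (sarr S) k)
      by (rewrite comp_assoc; exact Hsq).
    destruct (Hug _ _ _ Hcone) as [u [Hu1 _]].
    destruct (Huf _ _ _ (eq_sym Hu1)) as [v [Hv1 _]]. exists v. exact Hv1.
Qed.

End Subobjects.

Theorem lemma5 (C : Category) (HC : regular C) (T : C) (HT : is_terminal T)
  (X XX : C) (pi1 : Hom XX X) (pi2 : Hom XX X) (Hprod : is_product pi1 pi2)
  (R : SubT XX)
  (* very weakly point surjective: for every P there is c : 1 -> X with
     <c,c>^*(R) = c^*(P) in Sub(1) *)
  (HR : forall P : SubT X, exists c : Hom T X,
      forall (cc : Hom T XX), comp pi1 cc = c -> comp pi2 cc = c ->
      forall (S1 S2 : SubT T), is_pb_sub cc R S1 -> is_pb_sub c P S2 -> sub_eq S1 S2)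
  (tau : forall A : C, SubT A -> SubT A) (Htau : nat_trans_Sub tau) :
  exists s : SubT T, sub_eq (tau T s) s.
Proof.
  destruct (Hprod X (idm X) (idm X)) as [d [Hd1 [Hd2 _]]].
  destruct (pb_sub_exists HC d R) as [D HD].
  destruct (HR (tau X D)) as [c Hc].
  destruct (pb_sub_exists HC c D) as [s Hs].
  destruct (pb_sub_exists HC (comp d c) R) as [Sdc Hdc].
  destruct (pb_sub_exists HC c (tau X D)) as [Stau Htau_c].
  exists s.
  assert (Hnat : sub_eq (tau T s) Stau) by exact (proj2 Htau _ _ c D s Stau Hs Htau_c).
  assert (Hpoint : sub_eq Sdc Stau).
  { apply (Hc (comp d c)); trivial.
    - rewrite comp_assoc, Hd1. apply comp_id_l.
    - rewrite comp_assoc, Hd2. apply comp_id_l. }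
  assert (Hfun : sub_eq s Sdc) by exact (pb_sub_comp HD Hs Hdc).
  apply (sub_eq_trans Hnat), sub_eq_sym, (sub_eq_trans Hfun), Hpoint.
Qed.
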